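(* Let $f:\mathbb{R}^n\times\mathbb{R}^m\to\mathbb{R}$ and $h:\mathbb{R}^m\to\mathbb{R}$. Let $U\subseteq\mathbb{R}^n$ be open and let $y:U\to\mathbb{R}^m$ satisfy $y(x)\in\operatorname{argmin}_{u\in\mathbb{R}^m} f(x,u)$ subject to $h(u)=0$ for every $x\in U$. Fix $x_0\in U$, write $y_0=y(x_0)$, and assume $f$ is twice continuously differentiable near $(x_0,y_0)$, $h$ is twice continuously differentiable near $y_0$, $y$ is continuous at $x_0$, and $D_Y h(y_0)\neq 0$. Let $$a=(D_Y h(y_0))^\top\in\mathbb{R}^m,\quad B=D^2_{XY}f(x_0,y_0)\in\mathbb{R}^{m\times n},\quad \lambda=\Big(\tfrac{\partial h}{\partial y_i}(y_0)\Big)^{-1}\tfrac{\partial f}{\partial y_i}(x_0,y_0)$$ for any index $i$ with $\frac{\partial h}{\partial y_i}(y_0)\neq 0$ (this value does not depend on the choice of $i$), and $H=D^2_{YY}f(x_0,y_0)-\lambda D^2_{YY}h(y_0)$. If $H$ is non-singular and $a^\top H^{-1}a\neq 0$, then $y$ is differentiable at $x_0$ and $$Dy(x_0)=\left(\frac{H^{-1}aa^\top H^{-1}}{a^\top H^{-1}a}-H^{-1}\right)B.$$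
   Context: Derivative conventions: Jacobians $Dg$ of $g:\mathbb{R}^n\to\mathbb{R}^k$ are $k\times n$ matrices; for scalar-valued functions they are row vectors. $D_X, D_Y$ are partial Jacobians with respect to the first/second argument; $D^2_{YY} f = D_Y (D_Y f)^{\top}$, $D^2_{XY} f = D_X (D_Y f)^{\top}\in\mathbb{R}^{m\times n}$. *)

From Stdlib Require Import Reals.
From mathcomp Require Import ssreflect ssrfun ssrbool eqtype ssrnat seq fintype bigop.
Set Implicit Arguments. Unset Strict Implicit.

Local Open Scope R_scope.

Definition vec (n : nat) := 'I_n -> R.
Definition mat (q p : nat) := 'I_q -> 'I_p -> R.

Definition rsum (n : nat) (F : 'I_n -> R) : R := \big[Rplus/0]_(i < n) F i.

Definition vadd n (u v : vec n) : vec n := fun i => u i + v i.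
Definition vsub n (u v : vec n) : vec n := fun i => u i - v i.
Definition dot n (u v : vec n) : R := rsum (fun i => u i * v i).
Definition vnorm n (u : vec n) : R := sqrt (rsum (fun i => u i * u i)).
Definition vdist n (u v : vec n) : R := vnorm (vsub u v).

Definition mv q p (L : mat q p) (u : vec p) : vec q := fun i => rsum (fun j => L i j * u j).
Definition vm q p (u : vec q) (L : mat q p) : vec p := fun j => rsum (fun i => u i * L i j).
Definition mm q p r (A : mat q p) (B : mat p r) : mat q r :=
  fun i k => rsum (fun j => A i j * B j k).
Definition idm (n : nat) : mat n n := fun i j => if i == j then 1 else 0.

(* Two-sided inverse: H is non-singular iff such an Hinv exists. *)
Definition is_inverse n (H Hinv : mat n n) : Prop := mm H Hinv = @idm n /\ mm Hinv H = @idm n.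

Definition has_deriv p q (g : vec p -> vec q) (z : vec p) (L : mat q p) : Prop :=
  forall eps, 0 < eps -> exists delta, 0 < delta /\
    forall k : vec p, vnorm k < delta ->
      vnorm (vsub (vsub (g (vadd z k)) (g z)) (mv L k)) <= eps * vnorm k.

(* Frechet derivative of a scalar function g : R^p -> R at z; the Jacobian
   (a row vector) is stored as the vector v. *)
Definition has_grad p (g : vec p -> R) (z : vec p) (v : vec p) : Prop :=
  has_deriv (fun w => fun _ : 'I_1 => g w) z (fun _ j => v j).

Definition cont_at p q (g : vec p -> vec q) (z : vec p) : Prop :=
  forall eps, 0 < eps -> exists delta, 0 < delta /\
    forall w, vdist w z < delta -> vdist (g w) (g z) < eps.

(* continuity of a matrix-valued function (entrywise, equivalently in any norm) *)
Definition mcont_at p q r (G : vec p -> mat q r) (z : vec p) : Prop :=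
  forall i j, cont_at (fun w => fun _ : 'I_1 => G w i j) z.

Definition C2_near_with p (g : vec p -> R) (Dg : vec p -> vec p)
    (D2g : vec p -> mat p p) (z0 : vec p) : Prop :=
  exists r, 0 < r /\ forall z, vdist z z0 < r ->
    has_grad g z (Dg z) /\ has_deriv Dg z (D2g z) /\ mcont_at D2g z.

Definition is_open n (U : vec n -> Prop) : Prop :=
  forall x, U x -> exists r, 0 < r /\ forall z, vdist z x < r -> U z.

Definition vjoin n m (x : vec n) (u : vec m) : vec (n + m) :=
  fun k => match split k with inl i => x i | inr j => u j end.
Definition uncurry_vec n m (f : vec n -> vec m -> R) : vec (n + m) -> R :=
  fun z => f (fun i => z (lshift m i)) (fun j => z (rshift n j)).

Definition is_constrained_argmin n m (f : vec n -> vec m -> R) (h : vec m -> R)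
    (x : vec n) (u0 : vec m) : Prop :=
  h u0 = 0 /\ forall u, h u = 0 -> f x u0 <= f x u.

(* At a minimizer [u] of [f x] on [{h = 0}], the gradient of [f x] is a multiple [lam] of
   [grad h u]: otherwise a direction tangent to [{h = 0}] decreases [f x], and the intermediate
   value theorem bends it into a curve of feasible points.  Subtracting the first-order expansions
   at [x0] of these Lagrange conditions along [x |-> y x], and of [h (y x) = 0], shows that
   [d = y (x0 + k) - y x0] solves the bordered system [H d + B k = (lam (x0 + k) - lam x0) a],
   [a^T d = 0] up to [o(|k| + |d|)].  Eliminating the multiplier with [H^-1] gives
   [d = L k + o(|k| + |d|)] for the stated [L], and the [|d|] part of the error is absorbed. *)

From HB Require Import structures.
From Stdlib Require Import Reals Lra Classical FunctionalExtensionality Ranalysis5.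
From mathcomp Require Import ssreflect ssrfun ssrbool eqtype ssrnat seq fintype bigop.
Local Open Scope R_scope.

Set Implicit Arguments. Unset Strict Implicit.

Lemma Rplus_assoc' : associative Rplus. Proof. by move=> *; ring. Qed.
HB.instance Definition _ := Monoid.isComLaw.Build R 0 Rplus Rplus_assoc' Rplus_comm Rplus_0_l.
HB.instance Definition _ := Monoid.isMulLaw.Build R 0 Rmult Rmult_0_l Rmult_0_r.
Lemma Rmult_plus_distr_l' : left_distributive Rmult Rplus. Proof. by move=> *; ring. Qed.
Lemma Rmult_plus_distr_r' : right_distributive Rmult Rplus. Proof. by move=> *; ring. Qed.
HB.instance Definition _ :=
  Monoid.isAddLaw.Build R Rmult Rplus Rmult_plus_distr_l' Rmult_plus_distr_r'.

Lemma rsum_ext n (F G : 'I_n -> R) : (forall i, F i = G i) -> rsum F = rsum G.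
Proof. by move=> FG; apply: eq_bigr => i _. Qed.
Lemma rsumD n (F G : 'I_n -> R) : rsum (fun i => F i + G i) = rsum F + rsum G.
Proof. exact: big_split. Qed.
Lemma rsumZ n c (F : 'I_n -> R) : rsum (fun i => c * F i) = c * rsum F.
Proof. by rewrite /rsum big_distrr. Qed.
Lemma rsumZr n c (F : 'I_n -> R) : rsum (fun i => F i * c) = rsum F * c.
Proof. by rewrite Rmult_comm -rsumZ; apply: rsum_ext => i; ring. Qed.
Lemma rsumB n (F G : 'I_n -> R) : rsum (fun i => F i - G i) = rsum F - rsum G.
Proof.
have -> : rsum F - rsum G = rsum F + -1 * rsum G by ring.
by rewrite -rsumZ -rsumD; apply: rsum_ext => i; ring.
Qed.
Lemma rsum_le n (F G : 'I_n -> R) : (forall i, F i <= G i) -> rsum F <= rsum G.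
Proof. by move=> FG; apply: (big_ind2 (fun a b => a <= b)) => // *; lra. Qed.
Lemma rsum_ge0 n (F : 'I_n -> R) : (forall i, 0 <= F i) -> 0 <= rsum F.
Proof. by move=> F0; apply: (big_ind (fun a => 0 <= a)) => // *; lra. Qed.
Lemma Rabs_rsum n (F : 'I_n -> R) : Rabs (rsum F) <= rsum (fun i => Rabs (F i)).
Proof.
apply: (big_ind2 (fun a b => Rabs a <= b)) => [|a b c d ac bd|i _].
- by rewrite Rabs_R0; lra.
- by apply: Rle_trans (Rabs_triang _ _) _; lra.
- by move=> *; apply: Rle_refl.
Qed.
Lemma rsum_term n (F : 'I_n -> R) j : (forall i, 0 <= F i) -> F j <= rsum F.
Proof.
move=> F0; rewrite /rsum (bigD1 j) //=; set S := bigop _ _ _.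
have : 0 <= S by apply: (big_ind (fun a => 0 <= a)) => // *; lra.
lra.
Qed.
Lemma rsum_swap n m (F : 'I_n -> 'I_m -> R) :
  rsum (fun i => rsum (fun j => F i j)) = rsum (fun j => rsum (fun i => F i j)).
Proof. exact: exchange_big. Qed.
Lemma rsum_split n m (F : 'I_(n + m) -> R) :
  rsum F = rsum (fun i => F (lshift m i)) + rsum (fun j => F (rshift n j)).
Proof. exact: big_split_ord. Qed.
Lemma rsum_const n c : rsum (fun _ : 'I_n => c) = INR n * c.
Proof.
elim: n => [|n IH]; first by rewrite /rsum big_ord0 /=; ring.
by rewrite /rsum big_ord_recr S_INR /= -/(rsum _) IH; ring.
Qed.
Lemma rsum_delta n (u : 'I_n -> R) i : rsum (fun j => u j * (if i == j then 1 else 0)) = u i.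
Proof.
rewrite /rsum (bigD1 i) //= eqxx big1 => [|j]; first ring.
by rewrite eq_sym => /negbTE ->; ring.
Qed.

Lemma vjoin_l n m (x : vec n) (u : vec m) i : vjoin x u (lshift m i) = x i.
Proof. by rewrite /vjoin (unsplitK (inl _ i)). Qed.
Lemma vjoin_r n m (x : vec n) (u : vec m) j : vjoin x u (rshift n j) = u j.
Proof. by rewrite /vjoin (unsplitK (inr _ j)). Qed.
Lemma vjoinP n m (x : vec n) (u : vec m) (z : vec (n + m)) :
  (forall i, z (lshift m i) = x i) -> (forall j, z (rshift n j) = u j) -> z = vjoin x u.
Proof.
move=> zl zr; apply: functional_extensionality => l.
by case: (split_ordP l) => [i ->|j ->]; rewrite ?vjoin_l ?vjoin_r.
Qed.
Lemma vadd_vjoin n m (x k : vec n) (u d : vec m) :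
  vadd (vjoin x u) (vjoin k d) = vjoin (vadd x k) (vadd u d).
Proof. by apply: vjoinP => i; rewrite /vadd ?vjoin_l ?vjoin_r. Qed.
Lemma uncurry_vjoin n m (f : vec n -> vec m -> R) x u : uncurry_vec f (vjoin x u) = f x u.
Proof.
by rewrite /uncurry_vec; congr f; apply: functional_extensionality => i;
  rewrite ?vjoin_l ?vjoin_r.
Qed.
Lemma vadd_vsub n (x k : vec n) : vsub (vadd x k) x = k.
Proof. by apply: functional_extensionality => i; rewrite /vsub /vadd; ring. Qed.

Definition incr n m (y : vec n -> vec m) (x0 k : vec n) : vec m := vsub (y (vadd x0 k)) (y x0).

Lemma vadd_incr n m (y : vec n -> vec m) x0 k : vadd (y x0) (incr y x0 k) = y (vadd x0 k).
Proof. by apply: functional_extensionality => i; rewrite /incr /vsub {1}/vadd; ring. Qed.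

Lemma vadd_0 n (x : vec n) : vadd x (fun _ => 0) = x.
Proof. by apply: functional_extensionality => i; rewrite /vadd; ring. Qed.

Lemma dot_ext n (a u v : vec n) : (forall i, u i = v i) -> dot a u = dot a v.
Proof. by move=> uv; apply: rsum_ext => i; rewrite uv. Qed.
Lemma dotDZ n (a u w : vec n) al be :
  dot a (fun l => al * u l + be * w l) = al * dot a u + be * dot a w.
Proof. by rewrite /dot -!rsumZ -rsumD; apply: rsum_ext => i; ring. Qed.
Lemma dot_vjoin n m (a : vec (n + m)) (k : vec n) (d : vec m) :
  dot a (vjoin k d) = dot (fun i => a (lshift m i)) k + dot (fun j => a (rshift n j)) d.
Proof. by rewrite /dot rsum_split; congr (_ + _); apply: rsum_ext => i; rewrite ?vjoin_l ?vjoin_r. Qed.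
Lemma mv_vjoin q n m (A : mat q (n + m)) (k : vec n) (d : vec m) l :
  mv A (vjoin k d) l = mv (fun i j => A i (lshift m j)) k l + mv (fun i j => A i (rshift n j)) d l.
Proof. exact: dot_vjoin. Qed.
Lemma mv_mm q p r (A : mat q p) (B : mat p r) u i : mv A (mv B u) i = mv (mm A B) u i.
Proof.
transitivity (rsum (fun j => rsum (fun l => A i j * B j l * u l))).
  by apply: rsum_ext => j; rewrite -rsumZ; apply: rsum_ext => l; ring.
by rewrite rsum_swap; apply: rsum_ext => l; rewrite -rsumZr; apply: rsum_ext => j; ring.
Qed.
Lemma mv_idm n (u : vec n) i : mv (@idm n) u i = u i.
Proof. by rewrite -(rsum_delta u i); apply: rsum_ext => j; rewrite /idm eq_sym; ring. Qed.
Lemma dot_mv q p (a : vec q) (P : mat q p) (w : vec p) :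
  dot (vm a P) w = dot a (mv P w).
Proof.
transitivity (rsum (fun j => rsum (fun l => a l * P l j * w j))).
  by apply: rsum_ext => j; rewrite -rsumZr; apply: rsum_ext => l; ring.
by rewrite rsum_swap; apply: rsum_ext => l; rewrite -rsumZ; apply: rsum_ext => j; ring.
Qed.

Definition l1norm n (u : vec n) : R := rsum (fun i => Rabs (u i)).
Definition mat_l1norm q p (A : mat q p) : R := rsum (fun i => rsum (fun j => Rabs (A i j))).
Definition ev m (i : 'I_m) : vec m := fun l => if i == l then 1 else 0.

Lemma l1norm_ge0 n (u : vec n) : 0 <= l1norm u.
Proof. by apply: rsum_ge0 => i; apply: Rabs_pos. Qed.
Lemma mat_l1norm_ge0 q p (A : mat q p) : 0 <= mat_l1norm A.
Proof. by apply: rsum_ge0 => i; apply: rsum_ge0 => j; apply: Rabs_pos. Qed.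
Lemma abs_le_l1norm n (u : vec n) i : Rabs (u i) <= l1norm u.
Proof. by apply: (rsum_term (F := fun i => Rabs (u i))) => j; apply: Rabs_pos. Qed.
Lemma l1norm_ext n (u v : vec n) : (forall i, u i = v i) -> l1norm u = l1norm v.
Proof. by move=> uv; apply: rsum_ext => i; rewrite uv. Qed.
Lemma l1norm_triang n (w u v : vec n) :
  (forall i, w i = u i + v i) -> l1norm w <= l1norm u + l1norm v.
Proof. by move=> wuv; rewrite /l1norm -rsumD; apply: rsum_le => i; rewrite wuv; apply: Rabs_triang. Qed.
Lemma l1normZ n c (u : vec n) : l1norm (fun i => c * u i) = Rabs c * l1norm u.
Proof. by rewrite /l1norm -rsumZ; apply: rsum_ext => i; apply: Rabs_mult. Qed.
Lemma l1norm_ev m (i : 'I_m) : l1norm (ev i) = 1.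
Proof.
rewrite /l1norm -(rsum_delta (fun _ => 1) i); apply: rsum_ext => j.
by rewrite /ev; case: (i == j); rewrite ?Rabs_R1 ?Rabs_R0; ring.
Qed.
Lemma l1norm_vjoin n m (k : vec n) (d : vec m) : l1norm (vjoin k d) = l1norm k + l1norm d.
Proof. by rewrite /l1norm rsum_split; congr (_ + _); apply: rsum_ext => i; rewrite ?vjoin_l ?vjoin_r. Qed.
Lemma l1norm_mv q p (A : mat q p) u : l1norm (mv A u) <= mat_l1norm A * l1norm u.
Proof.
rewrite /l1norm /mat_l1norm -rsumZr; apply: rsum_le => i.
apply: Rle_trans (Rabs_rsum _) _; rewrite -rsumZr; apply: rsum_le => j.
by rewrite Rabs_mult; apply: Rmult_le_compat_l; [apply: Rabs_pos | apply: abs_le_l1norm].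
Qed.
Lemma abs_mv_le q p (A : mat q p) u i : Rabs (mv A u i) <= mat_l1norm A * l1norm u.
Proof. exact: Rle_trans (abs_le_l1norm _ _) (l1norm_mv A u). Qed.
Lemma abs_dot_le n (a u : vec n) : Rabs (dot a u) <= l1norm a * l1norm u.
Proof.
rewrite /dot /l1norm -rsumZr; apply: Rle_trans (Rabs_rsum _) _; apply: rsum_le => j.
by rewrite Rabs_mult; apply: Rmult_le_compat_l; [apply: Rabs_pos | apply: abs_le_l1norm].
Qed.

Lemma vnorm_ge0 n (u : vec n) : 0 <= vnorm u.
Proof. exact: sqrt_pos. Qed.
Lemma vnorm_ext n (u v : vec n) : (forall i, u i = v i) -> vnorm u = vnorm v.
Proof. by move=> uv; rewrite /vnorm; congr sqrt; apply: rsum_ext => i; rewrite uv. Qed.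
Lemma vnorm_scalar (r : R) : vnorm (fun _ : 'I_1 => r) = Rabs r.
Proof. by rewrite /vnorm /rsum big_ord1 sqrt_Rsqr_abs. Qed.
Lemma abs_le_vnorm n (u : vec n) i : Rabs (u i) <= vnorm u.
Proof.
rewrite /vnorm -sqrt_Rsqr_abs; apply: sqrt_le_1_alt; rewrite /Rsqr.
by apply: (rsum_term (F := fun i => u i * u i)) => j; nra.
Qed.
Lemma rsum_sqr_le n (F : 'I_n -> R) : (forall i, 0 <= F i) ->
  rsum (fun i => F i * F i) <= rsum F * rsum F.
Proof.
elim: n F => [|n IH] F F0; first by rewrite /rsum !big_ord0; lra.
rewrite /rsum !big_ord_recr /= -!/(rsum _).
have := IH (fun i => F (widen_ord (leqnSn n) i)) (fun i => F0 _).
have := rsum_ge0 (fun i => F0 (widen_ord (leqnSn n) i)).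
have := F0 ord_max; nra.
Qed.
Lemma vnorm_le_l1norm n (u : vec n) : vnorm u <= l1norm u.
Proof.
rewrite /vnorm -(sqrt_square (l1norm u)); last exact: l1norm_ge0.
apply: sqrt_le_1_alt; apply: Rle_trans (rsum_sqr_le (fun i => Rabs_pos (u i))).
by apply: rsum_le => i; rewrite -Rabs_mult Rabs_right; nra.
Qed.
Lemma l1norm_le_vnorm n (u : vec n) : l1norm u <= INR n * vnorm u.
Proof. by rewrite -rsum_const; apply: rsum_le => i; apply: abs_le_vnorm. Qed.

Definition near0 n (P : vec n -> Prop) : Prop :=
  exists delta, 0 < delta /\ forall k, vnorm k < delta -> P k.

Lemma near0_mono n (P Q : vec n -> Prop) : (forall k, P k -> Q k) -> near0 P -> near0 Q.
Proof. by move=> PQ [d [d0 Pd]]; exists d; split=> // k /Pd /PQ. Qed.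
Lemma near0_and n (P Q : vec n -> Prop) : near0 P -> near0 Q -> near0 (fun k => P k /\ Q k).
Proof.
move=> [d1 [d10 P1]] [d2 [d20 P2]]; exists (Rmin d1 d2); split; first exact: Rmin_pos.
by move=> k k_small; split; [apply: P1 | apply: P2];
  apply: Rlt_le_trans k_small _; [apply: Rmin_l | apply: Rmin_r].
Qed.
Lemma near0_l1norm n e : 0 < e -> near0 (fun k : vec n => l1norm k < e).
Proof.
move=> e0; exists (e / (INR n + 1)); split; first by apply: Rdiv_lt_0_compat => //; have := pos_INR n; lra.
move=> k k_small; apply: Rle_lt_trans (l1norm_le_vnorm k) _.
have := pos_INR n; have := vnorm_ge0 k.
have : e / (INR n + 1) * (INR n + 1) = e by field; have := pos_INR n; lra.
nra.
Qed.

Lemma has_grad_bound p (g : vec p -> R) z v : has_grad g z v ->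
  forall eps, 0 < eps -> near0 (fun k => Rabs (g (vadd z k) - g z - dot v k) <= eps * vnorm k).
Proof.
move=> gv eps /gv; apply: near0_mono => k.
by rewrite (@vnorm_ext 1 _ (fun _ => g (vadd z k) - g z - dot v k)) // vnorm_scalar.
Qed.
Lemma has_deriv_bound p q (g : vec p -> vec q) z L : has_deriv g z L ->
  forall eps, 0 < eps -> near0 (fun k => forall i, Rabs (g (vadd z k) i - g z i - mv L k i) <= eps * vnorm k).
Proof. by move=> gL eps /gL; apply: near0_mono => k bound i; apply: Rle_trans bound; apply: abs_le_vnorm. Qed.

Lemma has_deriv_along r p q (G : vec p -> vec q) z L (D : vec r -> vec p) (S : vec r -> R) :
  has_deriv G z L -> (forall k, vnorm (D k) <= S k) -> (forall s, 0 < s -> near0 (fun k => S k < s)) ->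
  forall eps, 0 < eps ->
    near0 (fun k => forall i, Rabs (G (vadd z (D k)) i - G z i - mv L (D k) i) <= eps * S k).
Proof.
move=> GL DS S0 eps eps0; have [delta [delta0 Gdelta]] := has_deriv_bound GL eps0.
apply: near0_mono (S0 _ delta0) => k Sk i.
apply: Rle_trans (Gdelta _ (Rle_lt_trans _ _ _ (DS k) Sk) i) _.
exact: Rmult_le_compat_l (Rlt_le _ _ eps0) (DS k).
Qed.

Definition locally p (P : vec p -> Prop) (z : vec p) : Prop := near0 (fun w => P (vadd z w)).

Lemma vnorm0 p : vnorm (fun _ : 'I_p => 0) = 0.
Proof. by rewrite /vnorm (rsum_ext (G := fun _ => 0)) ?rsum_const ?Rmult_0_r ?sqrt_0 // => i; ring. Qed.
Lemma vnorm_vadd_le p (u v : vec p) : vnorm (vadd u v) <= INR p * (vnorm u + vnorm v).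
Proof.
apply: Rle_trans (vnorm_le_l1norm _) _; apply: Rle_trans (l1norm_triang (u := u) (v := v) _) _ => //.
by have := l1norm_le_vnorm u; have := l1norm_le_vnorm v; lra.
Qed.
Lemma vadd_assoc p (z u v : vec p) : vadd (vadd z u) v = vadd z (vadd u v).
Proof. by apply: functional_extensionality => i; rewrite /vadd; ring. Qed.

Lemma locally_at p (P : vec p -> Prop) z : locally P z -> P z.
Proof. by move=> [delta [delta0 Pz]]; rewrite -(vadd_0 z); apply: Pz; rewrite vnorm0. Qed.

Lemma locally_locally p (P : vec p -> Prop) z : locally P z -> locally (locally P) z.
Proof.
move=> [delta [delta0 Pz]]; set r := delta / (2 * (INR p + 1)).
have r0 : 0 < r by apply: Rdiv_lt_0_compat => //; have := pos_INR p; lra.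
exists r; split=> // w w_small; exists r; split=> // w' w'_small.
rewrite vadd_assoc; apply: Pz; apply: Rle_lt_trans (vnorm_vadd_le w w') _.
have : r * (2 * (INR p + 1)) = delta by rewrite /r; field; have := pos_INR p; lra.
have := pos_INR p; have := vnorm_ge0 w; have := vnorm_ge0 w'; nra.
Qed.

Lemma is_open_locally p (U : vec p -> Prop) x : is_open U -> U x -> locally U x.
Proof.
move=> U_open /U_open [r [r0 Ur]]; exists r; split=> // w w_small.
by apply: Ur; rewrite /vdist vadd_vsub.
Qed.

Lemma locally_comp p q (g : vec p -> vec q) (Q : vec q -> Prop) x0 :
  cont_at g x0 -> locally Q (g x0) -> locally (fun x => Q (g x)) x0.
Proof.
move=> g_cont [delta [delta0 Qg]]; have [alpha [alpha0 g_close]] := g_cont _ delta0.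
exists alpha; split=> // w w_small.
have := Qg _ (g_close (vadd x0 w) ltac:(by rewrite /vdist vadd_vsub)).
congr Q; apply: functional_extensionality => i; rewrite /vadd /vsub; ring.
Qed.

Lemma cont_at_incr_small n m (y : vec n -> vec m) x0 :
  cont_at y x0 -> forall s, 0 < s -> near0 (fun k => l1norm (incr y x0 k) < s).
Proof.
move=> y_cont s s0; apply: (locally_comp (Q := fun u => l1norm (vsub u (y x0)) < s) y_cont).
by apply: near0_mono (near0_l1norm m s0) => w; rewrite vadd_vsub.
Qed.

Lemma incr_joint_small n m (y : vec n -> vec m) x0 :
  (forall s, 0 < s -> near0 (fun k => l1norm (incr y x0 k) < s)) ->
  forall s, 0 < s -> near0 (fun k => l1norm k + l1norm (incr y x0 k) < s).
Proof.
move=> incr_small s s0; have s20 : 0 < s / 2 by lra.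
by apply: near0_mono (near0_and (near0_l1norm n s20) (incr_small _ s20)) => k [? ?]; lra.
Qed.

Lemma cont_at_graph n m (y : vec n -> vec m) x0 : cont_at y x0 -> cont_at (fun x => vjoin x (y x)) x0.
Proof.
move=> y_cont eps eps0; have [delta [delta0 small]] := incr_joint_small (cont_at_incr_small y_cont) eps0.
exists delta; split=> // x x_close.
have -> : x = vadd x0 (vsub x x0) by apply: functional_extensionality => i; rewrite /vadd /vsub; ring.
rewrite /vdist -vadd_incr -vadd_vjoin vadd_vsub.
apply: Rle_lt_trans (vnorm_le_l1norm _) _; rewrite l1norm_vjoin; exact: small.
Qed.

Lemma continuity_pt_lipschitz (f : R -> R) a C delta : 0 < delta -> 0 <= C ->
  (forall a', Rabs (a' - a) < delta -> Rabs (f a' - f a) <= C * Rabs (a' - a)) ->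
  continuity_pt f a.
Proof.
move=> delta0 C0 f_lip eps eps0.
exists (Rmin delta (eps / (C + 1))); split; first by apply: Rmin_pos => //; apply: Rdiv_lt_0_compat; lra.
move=> x [_ /= x_close]; rewrite /R_dist in x_close *.
have := Rmin_l delta (eps / (C + 1)); have := Rmin_r delta (eps / (C + 1)) => ? ?.
have : eps / (C + 1) * (C + 1) = eps by field; lra.
have := f_lip x ltac:(lra); have := Rabs_pos (x - a); nra.
Qed.

Lemma has_grad_continuity_line p (g : vec p -> R) (z e v : vec p) c :
  has_grad g (vadd z (fun l => c * e l)) v ->
  continuity_pt (fun s => g (vadd z (fun l => s * e l))) c.
Proof.
set zc := vadd z _ => gv; have [delta [delta0 g_bound]] := has_grad_bound gv Rlt_0_1.
apply: (@continuity_pt_lipschitz _ _ (l1norm v * l1norm e + l1norm e) (delta / (l1norm e + 1))).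
- by apply: Rdiv_lt_0_compat => //; have := l1norm_ge0 e; lra.
- by have := l1norm_ge0 e; have := l1norm_ge0 v; nra.
move=> s s_close; set k := fun l => (s - c) * e l.
have k_norm : l1norm k = Rabs (s - c) * l1norm e by rewrite l1normZ.
have k_small : vnorm k < delta.
  apply: Rle_lt_trans (vnorm_le_l1norm k) _; rewrite k_norm.
  have : delta / (l1norm e + 1) * (l1norm e + 1) = delta by field; have := l1norm_ge0 e; lra.
  have := l1norm_ge0 e; have := Rabs_pos (s - c); nra.
have -> : vadd z (fun l => s * e l) = vadd zc k.
  by apply: functional_extensionality => l; rewrite /zc /k /vadd; ring.
have := g_bound k k_small; have := abs_dot_le v k; have := vnorm_le_l1norm k.
have := Rabs_triang (g (vadd zc k) - g zc - dot v k) (dot v k).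
have -> : g (vadd zc k) - g zc - dot v k + dot v k = g (vadd zc k) - g zc by ring.
rewrite k_norm -/zc; lra.
Qed.

Lemma IVT_sign (phi : R -> R) r : 0 < r ->
  (forall s, - r <= s <= r -> continuity_pt phi s) ->
  (phi (- r) < 0 < phi r) \/ (phi r < 0 < phi (- r)) ->
  exists s, Rabs s <= r /\ phi s = 0.
Proof.
move=> r0 phi_cont [[lo hi]|[lo hi]].
- have [s [s_in phi_s]] := IVT_interv phi (- r) r phi_cont ltac:(lra) lo hi.
  by exists s; split=> //; apply: Rabs_le.
- have mphi_cont s : - r <= s <= r -> continuity_pt (fun s => - phi s) s.
    by move=> s_in; apply: continuity_pt_opp; apply: phi_cont.
  have [s [s_in phi_s]] := IVT_interv (fun s => - phi s) (- r) r mphi_cont ltac:(lra) ltac:(lra) ltac:(lra).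
  by exists s; split; [apply: Rabs_le | lra].
Qed.

Lemma l1norm_line m (v : vec m) i t s :
  l1norm (fun l => t * v l + s * ev i l) <= Rabs t * l1norm v + Rabs s.
Proof.
apply: Rle_trans (l1norm_triang (u := fun l => t * v l) (v := fun l => s * ev i l) _) _ => //.
by rewrite !l1normZ l1norm_ev; lra.
Qed.

Lemma dot_ev m (a : vec m) i : dot a (ev i) = a i.
Proof. exact: rsum_delta. Qed.

Lemma vnorm_line_le m (v : vec m) i t s eta : 0 <= t -> Rabs s <= eta * t ->
  vnorm (fun l => t * v l + s * ev i l) <= t * (l1norm v + eta).
Proof.
move=> t0 s_small; apply: Rle_trans (vnorm_le_l1norm _) _.
by apply: Rle_trans (l1norm_line v i t s) _; rewrite Rabs_right; lra.
Qed.

(* On the segment [s |-> u0 + t v + s e_i0], [h] is [s * b i0] up to [o(t)], so it changes sign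
   between [s = -eta t] and [s = eta t]; the intermediate value theorem gives a feasible point. *)
Lemma feasible_direction m (h : vec m -> R) (u0 b v : vec m) i0 :
  h u0 = 0 -> has_grad h u0 b -> locally (fun u => exists c, has_grad h u c) u0 ->
  b i0 <> 0 -> dot b v = 0 ->
  forall eta, 0 < eta -> exists t0, 0 < t0 /\ forall t, 0 < t < t0 ->
    exists s, Rabs s <= eta * t /\ h (vadd u0 (fun l => t * v l + s * ev i0 l)) = 0.
Proof.
move=> hu0 hb [r [r0 h_diff]] bi0 bv eta eta0.
have be0 : 0 < Rabs (b i0) by apply: Rabs_pos_lt.
set K := l1norm v + eta + 1.
have K0 : 0 < K by rewrite /K; have := l1norm_ge0 v; lra.
set eps := eta * Rabs (b i0) / (2 * K).
have eps0 : 0 < eps by apply: Rdiv_lt_0_compat; nra.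
have [dh [dh0 h_bound]] := has_grad_bound hb eps0.
set rho := Rmin dh r.
have rho0 : 0 < rho by apply: Rmin_pos.
exists (rho / K); split; first exact: Rdiv_lt_0_compat.
move=> t [t0 t_small]; set w := fun s l => t * v l + s * ev i0 l.
have tK : t * K < rho by move: t_small; rewrite /Rdiv => /(Rmult_lt_compat_r K _ _ K0);
  rewrite Rmult_assoc Rinv_l; lra.
have w_norm s : Rabs s <= eta * t -> vnorm (w s) <= t * (l1norm v + eta).
  by apply: vnorm_line_le; lra.
have w_small s : Rabs s <= eta * t -> vnorm (w s) < dh /\ vnorm (w s) < r.
  move=> /w_norm wn; have := Rmin_l dh r; have := Rmin_r dh r.
  have : t * (l1norm v + eta) < t * K by apply: Rmult_lt_compat_l => //; rewrite /K; lra.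
  rewrite -/rho; lra.
have phi_end s : Rabs s <= eta * t ->
    Rabs (h (vadd u0 (w s)) - s * b i0) < eta * t * Rabs (b i0) / 2.
  move=> s_small; have [wd _] := w_small s s_small.
  have dot_w : dot b (w s) = s * b i0 by rewrite /w dotDZ bv dot_ev; ring.
  have := h_bound _ wd; rewrite hu0 dot_w Rminus_0_r.
  have := Rmult_le_compat_l _ _ _ (Rlt_le _ _ eps0) (w_norm s s_small).
  have : eps * (t * (l1norm v + eta)) < eps * (t * K).
    by apply: Rmult_lt_compat_l => //; apply: Rmult_lt_compat_l => //; rewrite /K; lra.
  have : eps * (t * K) = eta * t * Rabs (b i0) / 2 by rewrite /eps; field; lra.
  lra.
set z := vadd u0 (fun l => t * v l).
have phi_line : (fun s => h (vadd u0 (w s))) = (fun s => h (vadd z (fun l => s * ev i0 l))).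
  apply: functional_extensionality => s; congr h; apply: functional_extensionality => l.
  by rewrite /z /w /vadd; ring.
apply: (IVT_sign (phi := fun s => h (vadd u0 (w s)))); first by nra.
- move=> s s_in; have [_ wr] := w_small s ltac:(apply: Rabs_le; lra).
  have [c hc] := h_diff _ wr; rewrite phi_line; apply: (@has_grad_continuity_line _ _ _ _ c).
  congr (has_grad h _ c): hc.
  by apply: functional_extensionality => l; rewrite /z /w /vadd; ring.
- have et0 : 0 <= eta * t by nra.
  have /Rabs_def2 [e1 e2] := phi_end (eta * t) ltac:(rewrite Rabs_right; lra).
  have /Rabs_def2 [e3 e4] := phi_end (- (eta * t)) ltac:(rewrite Rabs_Ropp Rabs_right; lra).
  have [bpos|bneg] : 0 < b i0 \/ b i0 < 0 by lra.
  + by left; rewrite Rabs_right in e1 e2 e3 e4; nra.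
  + by right; rewrite Rabs_left in e1 e2 e3 e4; nra.
Qed.

(* If [dot q v < 0], the feasible points [u0 + t v + O(eta t)] of [feasible_direction] would have
   [G] below [G u0]. *)
Lemma constrained_min_grad_dir m (G h : vec m -> R) (u0 q b v : vec m) i0 :
  h u0 = 0 -> (forall u, h u = 0 -> G u0 <= G u) -> has_grad G u0 q ->
  has_grad h u0 b -> locally (fun u => exists c, has_grad h u c) u0 ->
  b i0 <> 0 -> dot b v = 0 -> 0 <= dot q v.
Proof.
move=> hu0 G_min Gq hb h_diff bi0 bv; apply: Rnot_lt_le => qv_neg.
set ga := - dot q v; set Q := Rabs (q i0).
have Q0 : 0 <= Q := Rabs_pos _.
set eta := ga / (4 * (Q + 1)).
have eta0 : 0 < eta by apply: Rdiv_lt_0_compat; rewrite /ga; lra.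
have etaQ : eta * Q < ga / 4.
  have : eta * (4 * (Q + 1)) = ga by rewrite /eta; field; lra.
  nra.
set K := l1norm v + eta + 1.
have K0 : 0 < K by rewrite /K; have := l1norm_ge0 v; lra.
set eps := ga / (4 * K).
have eps0 : 0 < eps by apply: Rdiv_lt_0_compat; rewrite /ga; lra.
have [dg [dg0 G_bound]] := has_grad_bound Gq eps0.
have [t0 [t00 feasible]] := feasible_direction hu0 hb h_diff bi0 bv eta0.
set t := Rmin t0 (dg / K) / 2.
have dgK0 : 0 < dg / K by apply: Rdiv_lt_0_compat.
have t_pos : 0 < t by rewrite /t; have := Rmin_pos _ _ t00 dgK0; lra.
have [t_t0 t_dg] : t < t0 /\ t * K < dg.
  have := Rmin_l t0 (dg / K); have := Rmin_r t0 (dg / K) => ? ?; split; first by rewrite /t; lra.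
  have : dg / K * K = dg by field; lra.
  have : t < dg / K by rewrite /t; lra.
  nra.
have [s [s_small hs]] := feasible t (conj t_pos t_t0).
set w := fun l => t * v l + s * ev i0 l.
have w_norm : vnorm w <= t * (l1norm v + eta) by apply: vnorm_line_le; lra.
have w_lt : t * (l1norm v + eta) < t * K by apply: Rmult_lt_compat_l => //; rewrite /K; lra.
have dot_w : dot q w = - t * ga + s * q i0 by rewrite /w dotDZ dot_ev /ga; ring.
have sQ : s * q i0 <= eta * t * Q.
  apply: Rle_trans (Rle_abs _) _; rewrite Rabs_mult.
  by apply: Rmult_le_compat_r.
have := G_min _ hs; have /Rabs_def2 [G_up _] := Rle_lt_trans _ _ _ (G_bound w ltac:(lra)) 
  (Rmult_lt_compat_l _ _ _ eps0 (Rle_lt_trans _ _ _ w_norm w_lt)).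
have : eps * (t * K) = t * (ga / 4) by rewrite /eps; field; lra.
have := Rmult_lt_compat_l t _ _ t_pos etaQ.
have : 0 < t * ga by apply: Rmult_lt_0_compat => //; rewrite /ga; lra.
rewrite dot_w -/w in G_up *; lra.
Qed.

Lemma lagrange_multiplier m (G h : vec m -> R) (u0 q b : vec m) i0 :
  h u0 = 0 -> (forall u, h u = 0 -> G u0 <= G u) -> has_grad G u0 q ->
  has_grad h u0 b -> locally (fun u => exists c, has_grad h u c) u0 ->
  b i0 <> 0 -> forall j, q j * b i0 = q i0 * b j.
Proof.
move=> hu0 G_min Gq hb h_diff bi0 j.
set v := fun l => b i0 * ev j l + - b j * ev i0 l.
have bv : dot b v = 0 by rewrite /v dotDZ !dot_ev; ring.
have bmv : dot b (fun l => -1 * v l + 0 * v l) = 0 by rewrite dotDZ bv; ring.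
have := constrained_min_grad_dir hu0 G_min Gq hb h_diff bi0 bv.
have := constrained_min_grad_dir hu0 G_min Gq hb h_diff bi0 bmv.
by rewrite dotDZ /v dotDZ !dot_ev; lra.
Qed.

Lemma grad_parallel_of_constrained_min m (G h : vec m -> R) (u0 q b : vec m) :
  h u0 = 0 -> (forall u, h u = 0 -> G u0 <= G u) -> has_grad G u0 q ->
  has_grad h u0 b -> locally (fun u => exists c, has_grad h u c) u0 ->
  forall i j, q i * b j = q j * b i.
Proof.
move=> hu0 G_min Gq hb h_diff i j.
have [[i1 bi1]|b0] := classic (exists i1, b i1 <> 0).
  have mult := lagrange_multiplier hu0 G_min Gq hb h_diff bi1.
  apply: (Rmult_eq_reg_r (b i1)) => //.
  have -> : q i * b j * b i1 = q i * b i1 * b j by ring.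
  have -> : q j * b i * b i1 = q j * b i1 * b i by ring.
  by rewrite !mult; ring.
have b_0 l : b l = 0 by apply: NNPP => bl; apply: b0; exists l.
by rewrite !b_0; ring.
Qed.

Lemma dot0 n (a : vec n) : dot a (fun _ => 0) = 0.
Proof. by rewrite /dot (rsum_ext (G := fun _ => 0)) ?rsum_const ?Rmult_0_r // => i; ring. Qed.
Lemma vnorm_vjoin0 n m (k : vec m) : vnorm (vjoin (fun _ : 'I_n => 0) k) = vnorm k.
Proof.
rewrite /vnorm rsum_split (rsum_ext (G := fun _ => 0)) ?rsum_const => [|i]; last by rewrite vjoin_l; ring.
by rewrite Rmult_0_r Rplus_0_l; congr sqrt; apply: rsum_ext => j; rewrite vjoin_r.
Qed.

Lemma has_grad_partial_r n m (f : vec n -> vec m -> R) x u g :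
  has_grad (uncurry_vec f) (vjoin x u) g -> has_grad (f x) u (fun j => g (rshift n j)).
Proof.
move=> fg eps /(has_grad_bound fg) [delta [delta0 bound]]; exists delta; split=> // k k_small.
have := bound (vjoin (fun _ => 0) k); rewrite vnorm_vjoin0 vadd_vjoin !uncurry_vjoin vadd_0.
rewrite dot_vjoin dot0 Rplus_0_l => /(_ k_small) err.
rewrite (@vnorm_ext 1 _ (fun _ => f x (vadd u k) - f x u - dot (fun j => g (rshift n j)) k)) //.
by rewrite vnorm_scalar.
Qed.

Lemma constrained_argmin_grad_parallel n m (f : vec n -> vec m -> R) h x u Df Dh :
  is_constrained_argmin f h x u -> locally (fun z => has_grad (uncurry_vec f) z (Df z)) (vjoin x u) ->
  locally (fun v => has_grad h v (Dh v)) u ->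
  forall i j, Df (vjoin x u) (rshift n i) * Dh u j = Df (vjoin x u) (rshift n j) * Dh u i.
Proof.
move=> [hu u_min] /locally_at /has_grad_partial_r f_grad h_loc.
apply: grad_parallel_of_constrained_min hu u_min f_grad (locally_at h_loc) _.
by apply: near0_mono h_loc => w hw; exists (Dh (vadd u w)).
Qed.

Lemma C2_near_grad p (g : vec p -> R) Dg D2g z0 :
  C2_near_with g Dg D2g z0 -> locally (fun z => has_grad g z (Dg z)) z0.
Proof.
move=> [r [r0 C2]]; exists r; split=> // w w_small.
by have [] := C2 (vadd z0 w) ltac:(by rewrite /vdist vadd_vsub).
Qed.

Lemma C2_near_deriv p (g : vec p -> R) Dg D2g z0 :
  C2_near_with g Dg D2g z0 -> has_deriv Dg z0 (D2g z0).
Proof.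
move=> [r [r0 C2]]; have z0_in : vdist z0 z0 < r.
  rewrite /vdist (_ : vsub z0 z0 = fun _ => 0) ?vnorm0 //.
  by apply: functional_extensionality => i; rewrite /vsub; ring.
by have [_ []] := C2 z0 z0_in.
Qed.

(* Once [c <= 1/2], the relative bound gives [l1norm (incr y x0 k) = O(l1norm k)], so the
   [incr y x0 k] part of the right-hand side is absorbed. *)
Lemma has_deriv_of_relative_bound n m (y : vec n -> vec m) x0 (L : mat m n) :
  (forall c, 0 < c -> near0 (fun k =>
     l1norm (vsub (incr y x0 k) (mv L k)) <= c * (l1norm k + l1norm (incr y x0 k)))) ->
  has_deriv y x0 L.
Proof.
move=> rel eps eps0; set ML := mat_l1norm L; set C := 2 * (ML + 1) * (INR n + 1).
have ML0 : 0 <= ML := mat_l1norm_ge0 L.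
have C0 : 0 < C by rewrite /C; have := pos_INR n; nra.
have c0 : 0 < Rmin (/ 2) (eps / C) by apply: Rmin_pos; [lra | apply: Rdiv_lt_0_compat].
apply: near0_mono (rel _ c0) => k bound.
set d := incr y x0 k in bound *; set r := vsub d (mv L k) in bound *.
have := Rmin_l (/ 2) (eps / C); have := Rmin_r (/ 2) (eps / C) => c_eps c_half.
have S0 : 0 <= l1norm k + l1norm d by have := l1norm_ge0 k; have := l1norm_ge0 d; lra.
have d_le : l1norm d <= ML * l1norm k + l1norm r.
  apply: Rle_trans (l1norm_triang (u := mv L k) (v := r) _) _; first by move=> i; rewrite /r /vsub; ring.
  by have : l1norm (mv L k) <= ML * l1norm k := l1norm_mv L k; lra.
have S_le : l1norm k + l1norm d <= 2 * (ML + 1) * ((INR n + 1) * vnorm k).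
  have : l1norm r <= / 2 * (l1norm k + l1norm d) by apply: Rle_trans bound _; apply: Rmult_le_compat_r.
  have := l1norm_le_vnorm k; have := vnorm_ge0 k; have := l1norm_ge0 k; nra.
apply: Rle_trans (vnorm_le_l1norm r) _; apply: Rle_trans bound _.
apply: Rle_trans (Rmult_le_compat_r _ _ _ S0 c_eps) _.
have eps_C0 : 0 <= eps / C by apply: Rlt_le; apply: Rdiv_lt_0_compat.
apply: Rle_trans (Rmult_le_compat_l _ _ _ eps_C0 (_ : _ <= C * vnorm k)) _; first by rewrite /C; lra.
by right; field; lra.
Qed.

(* With [P] the inverse of the Hessian [H] of the Lagrangian, this is minus the upper left block
   of the inverse of the bordered Hessian [[H, a], [a^T, 0]]. *)
Definition constrained_sensitivity m (P : mat m m) (a : vec m) : mat m m :=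
  fun i j => mv P a i * vm a P j / dot a (mv P a) - P i j.

Lemma mvDB q p (A : mat q p) (u v w : vec p) c i :
  mv A (fun j => u j + v j - c * w j) i = mv A u i + mv A v i - c * mv A w i.
Proof. by rewrite /mv -rsumZ -rsumD -rsumB; apply: rsum_ext => j; ring. Qed.
Lemma mvB q p (A A' : mat q p) c u i :
  mv (fun i j => A i j - c * A' i j) u i = mv A u i - c * mv A' u i.
Proof. by rewrite /mv -rsumZ -rsumB; apply: rsum_ext => j; ring. Qed.
Lemma dotDB p (a u v w : vec p) c :
  dot a (fun j => u j + v j - c * w j) = dot a u + dot a v - c * dot a w.
Proof. by rewrite /dot -rsumZ -rsumD -rsumB; apply: rsum_ext => j; ring. Qed.

(* [L k] with [L := constrained_sensitivity P a * B] solves the bordered system [H d + B k = Dl a],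
   [dot a d = 0]; this is the error of an arbitrary [d] in terms of its two defects. *)
Lemma sensitivity_residual m n (P H : mat m m) (a : vec m) (B : mat m n) k d Dl :
  mm P H = @idm m -> dot a (mv P a) <> 0 ->
  let e := fun j => mv B k j + mv H d j - Dl * a j in
  forall i, d i - mv (mm (constrained_sensitivity P a) B) k i =
    mv P e i + (dot a d - dot a (mv P e)) / dot a (mv P a) * mv P a i.
Proof.
move=> PH c0 e i; set c := dot a (mv P a) in c0 *; set w := mv B k.
have Pe j : mv P e j = mv P w j + d j - Dl * mv P a j by rewrite mvDB (mv_mm P H) PH mv_idm.
have aPe : dot a (mv P e) = dot a (mv P w) + dot a d - Dl * c by rewrite (dot_ext _ Pe) dotDB.
have Lk : mv (mm (constrained_sensitivity P a) B) k i = mv P a i / c * dot a (mv P w) - mv P w i.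
  rewrite -mv_mm -/w -dot_mv -rsumZ -rsumB; apply: rsum_ext => j.
  by rewrite /constrained_sensitivity -/c; field.
by rewrite Lk Pe aPe; field.
Qed.

Lemma sensitivity_residual_bound m n (P H : mat m m) (a : vec m) (B : mat m n) k d Dl E eps :
  mm P H = @idm m -> dot a (mv P a) <> 0 ->
  l1norm (fun j => mv B k j + mv H d j - Dl * a j) <= E -> Rabs (dot a d) <= eps ->
  l1norm (fun i => d i - mv (mm (constrained_sensitivity P a) B) k i) <=
    mat_l1norm P * E + l1norm (mv P a) * ((eps + l1norm a * (mat_l1norm P * E)) / Rabs (dot a (mv P a))).
Proof.
move=> PH c0; set e := fun j => _ => eE ad_le.
rewrite (l1norm_ext (sensitivity_residual B k d Dl PH c0)) -/e.
apply: Rle_trans (l1norm_triang (u := mv P e) (v := fun i => _ * mv P a i) _) _ => //.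
rewrite l1normZ Rmult_comm.
have Pe_le : l1norm (mv P e) <= mat_l1norm P * E.
  by apply: Rle_trans (l1norm_mv P e) _; apply: Rmult_le_compat_l => //; apply: mat_l1norm_ge0.
apply: Rplus_le_compat => //; apply: Rmult_le_compat_l; first exact: l1norm_ge0.
rewrite /Rdiv Rabs_mult Rabs_inv; apply: Rmult_le_compat_r.
  by apply: Rlt_le; apply: Rinv_0_lt_compat; apply: Rabs_pos_lt.
apply: Rle_trans (Rabs_triang _ _) _; rewrite Rabs_Ropp; apply: Rplus_le_compat => //.
apply: Rle_trans (abs_dot_le a _) _; apply: Rmult_le_compat_l => //; exact: l1norm_ge0.
Qed.

Lemma ratio_perturb (a0 a1 g0 g1 c : R) :
  a0 <> 0 -> Rabs (a1 - a0) <= c -> Rabs (g1 - g0) <= c -> c <= Rabs a0 / 2 ->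
  let Lam := 2 * (Rabs g0 + Rabs a0) / Rabs a0 in
  a1 <> 0 /\ Rabs (g1 / a1) <= Lam /\ Rabs (g1 / a1 - g0 / a0) * Rabs a0 <= (Lam + 1) * c.
Proof.
move=> a00 a_close g_close c_small Lam; have a0_pos := Rabs_pos_lt _ a00.
have a1_big : Rabs a0 / 2 <= Rabs a1.
  have := Rabs_triang_inv a0 (a0 - a1); rewrite -Rabs_Ropp Ropp_minus_distr in a_close.
  have -> : a0 - (a0 - a1) = a1 by ring.
  lra.
have a10 : a1 <> 0 by move=> a1_0; rewrite a1_0 Rabs_R0 in a1_big; lra.
have g1_le : Rabs g1 <= Rabs g0 + Rabs a0 / 2.
  have := Rabs_triang (g1 - g0) g0; have -> : g1 - g0 + g0 = g1 by ring.
  lra.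
have lam1_le : Rabs (g1 / a1) <= Lam.
  rewrite /Rdiv Rabs_mult Rabs_inv; apply: Rle_trans (_ : _ <= Rabs g1 / (Rabs a0 / 2)) _.
    apply: Rmult_le_compat_l; first exact: Rabs_pos.
    by apply: Rinv_le_contravar => //; lra.
  rewrite /Lam; have -> : Rabs g1 / (Rabs a0 / 2) = 2 * Rabs g1 / Rabs a0 by field; lra.
  apply: Rmult_le_compat_r; first by left; apply: Rinv_0_lt_compat.
  have := Rabs_pos g0; lra.
split=> //; split=> //.
rewrite -Rabs_mult.
have -> : (g1 / a1 - g0 / a0) * a0 = g1 / a1 * (a0 - a1) + (g1 - g0) by field.
apply: Rle_trans (Rabs_triang _ _) _; rewrite Rabs_mult (Rabs_minus_sym a0 a1).
have := Rmult_le_compat _ _ _ _ (Rabs_pos _) (Rabs_pos _) lam1_le a_close; lra.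
Qed.

(* [gf x] and [gh x] stand for the gradients of the objective (in the second variable) and of the
   constraint at [(x, y x)]; the hypotheses are the Lagrange condition along the path [y] and the
   first-order expansions of both gradients and of the constraint at [x0]. *)
Section KKTPath.

Variables (n m : nat) (y : vec n -> vec m) (x0 : vec n) (gf gh : vec n -> vec m).
Variables (B : mat m n) (F D2 P : mat m m) (lam0 : R) (i0 : 'I_m).

Hypothesis P_inv : mm P (fun i j => F i j - lam0 * D2 i j) = @idm m.
Hypothesis aPa_neq0 : dot (gh x0) (mv P (gh x0)) <> 0.
Hypothesis gh_x0_i0 : gh x0 i0 <> 0.
Hypothesis gf_x0 : forall j, gf x0 j = lam0 * gh x0 j.
Hypothesis grad_parallel : near0 (fun k => forall j,
  gf (vadd x0 k) j * gh (vadd x0 k) i0 = gf (vadd x0 k) i0 * gh (vadd x0 k) j).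
Hypothesis incr_small : forall s, 0 < s -> near0 (fun k => l1norm (incr y x0 k) < s).
Hypothesis gf_taylor : forall eps, 0 < eps -> near0 (fun k => forall j,
  Rabs (gf (vadd x0 k) j - gf x0 j - (mv B k j + mv F (incr y x0 k) j))
    <= eps * (l1norm k + l1norm (incr y x0 k))).
Hypothesis gh_taylor : forall eps, 0 < eps -> near0 (fun k => forall j,
  Rabs (gh (vadd x0 k) j - gh x0 j - mv D2 (incr y x0 k) j) <= eps * l1norm (incr y x0 k)).
Hypothesis constraint_taylor : forall eps, 0 < eps -> near0 (fun k =>
  Rabs (dot (gh x0) (incr y x0 k)) <= eps * l1norm (incr y x0 k)).

Let S k := l1norm k + l1norm (incr y x0 k).
Let Lam := 2 * (Rabs (gf x0 i0) + Rabs (gh x0 i0)) / Rabs (gh x0 i0).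

Lemma Lam_gt0 : 0 < Lam.
Proof.
have := Rabs_pos (gf x0 i0); have := Rabs_pos_lt _ gh_x0_i0 => a0 g0.
by apply: Rdiv_lt_0_compat; lra.
Qed.

Lemma S_ge0 k : 0 <= S k.
Proof. by have := l1norm_ge0 k; have := l1norm_ge0 (incr y x0 k); rewrite /S; lra. Qed.

Lemma near0_small_of_le_S (X : vec n -> R) M : 0 <= M -> near0 (fun k => X k <= M * S k) ->
  forall c, 0 < c -> near0 (fun k => X k <= c).
Proof.
move=> M0 XS c c0; have cM0 : 0 < c / (M + 1) by apply: Rdiv_lt_0_compat; lra.
apply: near0_mono (near0_and XS (incr_joint_small incr_small cM0)) => k [X_le S_lt].
have : c / (M + 1) * (M + 1) = c by field; lra.
have := S_ge0 k; rewrite /S in X_le *; nra.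
Qed.

Lemma gf_i0_close c : 0 < c -> near0 (fun k => Rabs (gf (vadd x0 k) i0 - gf x0 i0) <= c).
Proof.
have M0 : 0 <= 1 + mat_l1norm B + mat_l1norm F by have := mat_l1norm_ge0 B; have := mat_l1norm_ge0 F; lra.
apply: (near0_small_of_le_S M0); apply: near0_mono (gf_taylor Rlt_0_1) => k /(_ i0) taylor.
set b := mv B k i0 + mv F (incr y x0 k) i0 in taylor.
have b_le : Rabs b <= mat_l1norm B * l1norm k + mat_l1norm F * l1norm (incr y x0 k).
  by apply: Rle_trans (Rabs_triang _ _) _; apply: Rplus_le_compat; apply: abs_mv_le.
have := Rabs_triang (gf (vadd x0 k) i0 - gf x0 i0 - b) b; rewrite /S.
have -> : gf (vadd x0 k) i0 - gf x0 i0 - b + b = gf (vadd x0 k) i0 - gf x0 i0 by ring.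
have := l1norm_ge0 k; have := l1norm_ge0 (incr y x0 k).
have := mat_l1norm_ge0 B; have := mat_l1norm_ge0 F; nra.
Qed.

Lemma gh_i0_close c : 0 < c -> near0 (fun k => Rabs (gh (vadd x0 k) i0 - gh x0 i0) <= c).
Proof.
have M0 : 0 <= 1 + mat_l1norm D2 by have := mat_l1norm_ge0 D2; lra.
apply: (near0_small_of_le_S M0); apply: near0_mono (gh_taylor Rlt_0_1) => k /(_ i0) taylor.
have := abs_mv_le D2 (incr y x0 k) i0; set b := mv D2 _ i0 in taylor *.
have := Rabs_triang (gh (vadd x0 k) i0 - gh x0 i0 - b) b; rewrite /S.
have -> : gh (vadd x0 k) i0 - gh x0 i0 - b + b = gh (vadd x0 k) i0 - gh x0 i0 by ring.
have := l1norm_ge0 k; have := l1norm_ge0 (incr y x0 k); have := mat_l1norm_ge0 D2; nra.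
Qed.

Lemma multiplier_close e : 0 < e -> near0 (fun k => exists lam1,
  (forall j, gf (vadd x0 k) j = lam1 * gh (vadd x0 k) j) /\ Rabs lam1 <= Lam /\ Rabs (lam1 - lam0) <= e).
Proof.
move=> e0; have a0 := Rabs_pos_lt _ gh_x0_i0.
have Lam0 := Lam_gt0.
set c := Rmin (Rabs (gh x0 i0) / 2) (e * Rabs (gh x0 i0) / (Lam + 1)).
have c0 : 0 < c by apply: Rmin_pos; apply: Rdiv_lt_0_compat; nra.
apply: near0_mono (near0_and grad_parallel (near0_and (gf_i0_close c0) (gh_i0_close c0))).
move=> k [parallel [gf_close gh_close]].
have [|gh_k_i0 [lam1_le lam1_close]] := ratio_perturb gh_x0_i0 gh_close gf_close; first exact: Rmin_l.
rewrite -/Lam in lam1_close.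
exists (gf (vadd x0 k) i0 / gh (vadd x0 k) i0); split; last split => //.
  move=> j; apply: (Rmult_eq_reg_r (gh (vadd x0 k) i0)) => //.
  by rewrite parallel; field.
have -> : lam0 = gf x0 i0 / gh x0 i0 by rewrite gf_x0; field.
apply: (Rmult_le_reg_r (Rabs (gh x0 i0))) => //; apply: Rle_trans lam1_close _.
have := Rmin_r (Rabs (gh x0 i0) / 2) (e * Rabs (gh x0 i0) / (Lam + 1)); rewrite -/c => c_le.
have : (Lam + 1) * (e * Rabs (gh x0 i0) / (Lam + 1)) = e * Rabs (gh x0 i0) by field; lra.
have := Rmult_le_compat_l (Lam + 1) _ _ ltac:(lra) c_le; lra.
Qed.

Lemma stationarity_defect_le k lam1 eps : 0 <= eps ->
  (forall j, Rabs (gf (vadd x0 k) j - gf x0 j - (mv B k j + mv F (incr y x0 k) j)) <= eps * S k) ->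
  (forall j, Rabs (gh (vadd x0 k) j - gh x0 j - mv D2 (incr y x0 k) j) <= eps * l1norm (incr y x0 k)) ->
  (forall j, gf (vadd x0 k) j = lam1 * gh (vadd x0 k) j) -> Rabs lam1 <= Lam -> Rabs (lam1 - lam0) <= eps ->
  l1norm (fun j => mv B k j + mv (fun i l => F i l - lam0 * D2 i l) (incr y x0 k) j - (lam1 - lam0) * gh x0 j)
    <= eps * (INR m * (1 + mat_l1norm D2 + Lam)) * S k.
Proof.
move=> eps0 gf_err gh_err gf_k lam1_le lam1_close; set d := incr y x0 k in gf_err gh_err *.
apply: Rle_trans (rsum_le (G := fun _ => eps * (1 + mat_l1norm D2 + Lam) * S k) _) _; last first.
  by rewrite rsum_const; right; ring.
move=> j /=; rewrite mvB; have ef_le := gf_err j; have eh_le := gh_err j.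
set ef := gf (vadd x0 k) j - _ - _ in ef_le; set eh := gh (vadd x0 k) j - _ - _ in eh_le.
have -> : mv B k j + (mv F d j - lam0 * mv D2 d j) - (lam1 - lam0) * gh x0 j =
          - ef + (lam1 - lam0) * mv D2 d j + lam1 * eh.
  by rewrite /ef /eh gf_k gf_x0; ring.
have d_le : l1norm d <= S k by have := l1norm_ge0 k; rewrite /S -/d; lra.
have D2d_le := abs_mv_le D2 d j.
have Lam0 : 0 <= Lam by apply: Rle_trans lam1_le; apply: Rabs_pos.
apply: Rle_trans (Rabs_triang _ _) _; apply: Rle_trans (Rplus_le_compat_r _ _ _ (Rabs_triang _ _)) _.
rewrite Rabs_Ropp !Rabs_mult.
have := Rmult_le_compat _ _ _ _ (Rabs_pos _) (Rabs_pos _) lam1_close D2d_le.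
have := Rmult_le_compat _ _ _ _ (Rabs_pos _) (Rabs_pos _) lam1_le eh_le.
have := Rmult_le_compat_l (eps * mat_l1norm D2) _ _
  (Rmult_le_pos _ _ eps0 (mat_l1norm_ge0 D2)) d_le.
have := Rmult_le_compat_l (Lam * eps) _ _ (Rmult_le_pos _ _ Lam0 eps0) d_le.
lra.
Qed.

Theorem kkt_path_has_deriv :
  has_deriv y x0 (mm (constrained_sensitivity P (gh x0)) B).
Proof.
apply: has_deriv_of_relative_bound => c c0.
have Lam0 := Rlt_le _ _ Lam_gt0.
set E := INR m * (1 + mat_l1norm D2 + Lam).
set K := mat_l1norm P * E + l1norm (mv P (gh x0)) * ((1 + l1norm (gh x0) * (mat_l1norm P * E))
  / Rabs (dot (gh x0) (mv P (gh x0)))).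
have E0 : 0 <= E by apply: Rmult_le_pos; [apply: pos_INR | have := mat_l1norm_ge0 D2; lra].
have K0 : 0 <= K.
  apply: Rplus_le_le_0_compat; first exact: Rmult_le_pos (mat_l1norm_ge0 P) E0.
  apply: Rmult_le_pos; first exact: l1norm_ge0.
  apply: Rmult_le_pos; last by left; apply: Rinv_0_lt_compat; apply: Rabs_pos_lt.
  have := Rmult_le_pos _ _ (l1norm_ge0 (gh x0)) (Rmult_le_pos _ _ (mat_l1norm_ge0 P) E0); lra.
set eps := c / (K + 1); have eps0 : 0 < eps by apply: Rdiv_lt_0_compat; lra.
apply: near0_mono (near0_and (gf_taylor eps0) (near0_and (gh_taylor eps0)
  (near0_and (constraint_taylor eps0) (multiplier_close eps0)))).
move=> k [gf_err [gh_err [constraint_err [lam1 [gf_k [lam1_le lam1_close]]]]]].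
have defect := stationarity_defect_le (Rlt_le _ _ eps0) gf_err gh_err gf_k lam1_le lam1_close.
apply: Rle_trans (sensitivity_residual_bound P_inv aPa_neq0 defect constraint_err) _.
have aPa_pos := Rabs_pos_lt _ aPa_neq0.
apply: Rle_trans (_ : _ <= eps * K * S k) _.
  have -> : eps * K * S k = mat_l1norm P * (eps * E * S k) + l1norm (mv P (gh x0)) *
      ((eps * S k + l1norm (gh x0) * (mat_l1norm P * (eps * E * S k))) / Rabs (dot (gh x0) (mv P (gh x0)))).
    by rewrite /K; field; lra.
  apply: Rplus_le_compat_l; apply: Rmult_le_compat_l; first exact: l1norm_ge0.
  apply: Rmult_le_compat_r; first by left; apply: Rinv_0_lt_compat.
  apply: Rplus_le_compat_r; apply: Rmult_le_compat_l; first lra.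
  by have := l1norm_ge0 k; rewrite /S; lra.
apply: Rmult_le_compat_r; first exact: S_ge0.
have : eps * (K + 1) = c by rewrite /eps; field; lra.
nra.
Qed.
End KKTPath.

Lemma graph_taylor n m q (G : vec (n + m) -> vec q) L (y : vec n -> vec m) x0 :
  has_deriv G (vjoin x0 (y x0)) L -> cont_at y x0 ->
  forall eps, 0 < eps -> near0 (fun k => forall l,
    Rabs (G (vjoin (vadd x0 k) (y (vadd x0 k))) l - G (vjoin x0 (y x0)) l - mv L (vjoin k (incr y x0 k)) l)
      <= eps * (l1norm k + l1norm (incr y x0 k))).
Proof.
move=> GL y_cont eps eps0.
have vjoin_le k : vnorm (vjoin k (incr y x0 k)) <= l1norm k + l1norm (incr y x0 k).
  by rewrite -l1norm_vjoin; apply: vnorm_le_l1norm.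
have := has_deriv_along GL vjoin_le (incr_joint_small (cont_at_incr_small y_cont)) eps0.
by apply: near0_mono => k; rewrite vadd_vjoin vadd_incr.
Qed.

Lemma incr_taylor n m q (G : vec m -> vec q) L (y : vec n -> vec m) x0 :
  has_deriv G (y x0) L -> cont_at y x0 ->
  forall eps, 0 < eps -> near0 (fun k => forall l,
    Rabs (G (y (vadd x0 k)) l - G (y x0) l - mv L (incr y x0 k) l) <= eps * l1norm (incr y x0 k)).
Proof.
move=> GL y_cont eps eps0.
have := has_deriv_along GL (fun k => vnorm_le_l1norm _) (cont_at_incr_small y_cont) eps0.
by apply: near0_mono => k; rewrite vadd_incr.
Qed.

Unset Implicit Arguments. Set Strict Implicit.

Theorem corollary1 (n m : nat) (f : vec n -> vec m -> R) (h : vec m -> R)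
    (U : vec n -> Prop) (y : vec n -> vec m) (x0 : vec n)
    (Df : vec (n + m) -> vec (n + m)) (D2f : vec (n + m) -> mat (n + m) (n + m))
    (Dh : vec m -> vec m) (D2h : vec m -> mat m m)
    (i0 : 'I_m) (Hinv : mat m m) :
  is_open U ->
  (forall x, U x -> is_constrained_argmin f h x (y x)) ->
  U x0 ->
  C2_near_with (uncurry_vec f) Df D2f (vjoin x0 (y x0)) ->
  C2_near_with h Dh D2h (y x0) ->
  cont_at y x0 ->
  (exists i, Dh (y x0) i <> 0) ->
  Dh (y x0) i0 <> 0 ->
  let z0 := vjoin x0 (y x0) in
  let a : vec m := Dh (y x0) in
  let B : mat m n := fun i j => D2f z0 (rshift n i) (lshift m j) in
  let lam := / Dh (y x0) i0 * Df z0 (rshift n i0) in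
  let H : mat m m := fun i j => D2f z0 (rshift n i) (rshift n j) - lam * D2h (y x0) i j in
  is_inverse H Hinv ->
  dot a (mv Hinv a) <> 0 ->
  has_deriv y x0
    (mm (fun i j => mv Hinv a i * vm a Hinv j / dot a (mv Hinv a) - Hinv i j) B).
Proof.
move=> U_open argmin U_x0 f_C2 h_C2 y_cont _ a_i0 z0 a B lam H [_ Hinv_H] aHa.
have f_loc := C2_near_grad f_C2; have h_loc := C2_near_grad h_C2.
apply: (@kkt_path_has_deriv _ _ _ _ (fun x j => Df (vjoin x (y x)) (rshift n j)) (fun x => Dh (y x))
  B _ (D2h (y x0)) _ lam i0 Hinv_H aHa a_i0).
- move=> j; have := constrained_argmin_grad_parallel (argmin x0 U_x0) f_loc h_loc j i0.
  by rewrite -/z0 -/a /lam => e; field_simplify_eq => //; rewrite e; ring.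
- apply: near0_mono (near0_and (is_open_locally U_open U_x0) (near0_and
    (locally_comp (cont_at_graph y_cont) (locally_locally f_loc))
    (locally_comp y_cont (locally_locally h_loc)))).
  by move=> k [U_k [f_k h_k]] j; apply: constrained_argmin_grad_parallel (argmin _ U_k) f_k h_k j i0.
- exact: cont_at_incr_small y_cont.
- move=> eps /(graph_taylor (C2_near_deriv f_C2) y_cont); apply: near0_mono => k err j.
  by have := err (rshift n j); rewrite mv_vjoin.
- exact: incr_taylor (C2_near_deriv h_C2) y_cont.
- move=> eps /(incr_taylor (locally_at h_loc) y_cont) err.
  apply: near0_mono (near0_and err (is_open_locally U_open U_x0)) => k [/(_ ord0) err_k U_k].
  by move: err_k; rewrite (argmin _ U_k).1 (argmin _ U_x0).1 Rminus_0_r Rminus_0_l Rabs_Ropp.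
Qed.
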